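(* Let $P\subset\mathbb{R}^d$ be a full-dimensional lattice polytope with facet presentation $P=\{x: n_F(x)\ge -h_F\ \forall F\in\mathcal{F}(P)\}$ and codegree $a$, and suppose $P=\lfloor aP\rfloor+\{P\}$. Then \[\lfloor aP\rfloor=\{x\in\mathbb{R}^d: n_F(x)\ge 1-ah_F \text{ for all } F\in\mathcal{F}(P)\}\] and \[\{P\}=\{x\in\mathbb{R}^d: n_F(x)\ge (a-1)h_F-1 \text{ for all } F\in\mathcal{F}(P)\}.\] In particular, the right-hand sides are lattice polytopes. Furthermore, if $a=1$, then $\{P\}$ is a reflexive polytope.
   Context: $\mathcal{F}(P)$ is the set of facets of $P$; $n_F\in(\mathbb{Z}^d)^*$ is the primitive inner normal of $F$ and $h_F\in\mathbb{Z}$. The codegree is $a=\min\{k\in\mathbb{Z}_{\ge1}: \mathrm{int}(kP)\cap\mathbb{Z}^d\ne\varnothing\}$. For a lattice polytope $Q$, $\lfloor Q\rfloor=\mathrm{conv}(\mathrm{int}(Q)\cap\mathbb{Z}^d)$. The remainder polytope is $\{P\}=\mathrm{conv}\{x\in\mathbb{Z}^d: n_F(x)\ge (a-1)h_F-1\ \forall F\in\mathcal{F}(P)\}$. $+$ is Minkowski sum. The dual of a polytope $Q$ is $Q^*=\{n\in(\mathbb{R}^d)^*: n(x)\ge -1\ \forall x\in Q\}$; $Q$ is reflexive if both $Q$ and $Q^*$ are lattice polytopes (with respect to $\mathbb{Z}^d$ and $(\mathbb{Z}^d)^*$). *)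

From mathcomp Require Import all_boot all_order all_algebra.
From mathcomp Require Import reals.
Set Implicit Arguments. Unset Strict Implicit. Unset Printing Implicit Defensive.
Import Order.TTheory GRing.Theory Num.Theory.
Local Open Scope ring_scope.

Section Polytopes.
Variables (R : realType) (d : nat).

Definition vec := 'rV[R]_d.
Definition pset := vec -> Prop.

Definition lattice_pt (x : vec) : Prop := forall i, x ord0 i \is a Num.int.

Definition ev (n : 'rV[int]_d) (x : vec) : R := \sum_i (n ord0 i)%:~R * x ord0 i.

Definition evR (u x : vec) : R := \sum_i u ord0 i * x ord0 i.

Definition primitive (n : 'rV[int]_d) : bool := \big[gcdn/0%N]_i `|n ord0 i|%N == 1%N.

Definition conv (S : pset) : pset := fun x =>
  exists (k : nat) (p : 'I_k -> vec) (l : 'I_k -> R),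
    (forall i, S (p i)) /\ (forall i, 0 <= l i) /\ \sum_i l i = 1 /\
    x = \sum_i l i *: p i.

Definition lattice_polytope (P : pset) : Prop :=
  exists V : seq vec, V != [::] /\ (forall v, v \in V -> lattice_pt v) /\
    forall x, P x <-> conv (fun y => y \in V) x.

(* full-dimensional: P contains d+1 affinely independent points *)
Definition full_dim (P : pset) : Prop :=
  exists (x0 : vec) (M : 'M[R]_d), P x0 /\ \rank M = d /\
    forall j, P (x0 + row j M).

(* (n, h) with n primitive defines a facet F = {x in P : n(x) = -h} of P:
   P lies in {n(x) >= -h} and F has affine dimension d-1 *)
Definition is_facet (P : pset) (n : 'rV[int]_d) (h : int) : Prop :=
  primitive n /\ (forall x, P x -> ev n x >= - h%:~R) /\
  exists (x0 : vec) (M : 'M[R]_(d.-1, d)),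
    P x0 /\ ev n x0 = - h%:~R /\ \rank M = d.-1 /\
    forall j, P (x0 + row j M) /\ ev n (x0 + row j M) = - h%:~R.

Definition dil (k : R) (P : pset) : pset := fun x => exists y, P y /\ x = k *: y.

Definition interior_pt (P : pset) (x : vec) : Prop :=
  exists2 e : R, 0 < e & forall y : vec,
    (forall i, `|y ord0 i - x ord0 i| < e) -> P y.

Definition is_codegree (P : pset) (a : nat) : Prop :=
  (1 <= a)%N /\
  (exists x, lattice_pt x /\ interior_pt (dil a%:R P) x) /\
  forall k : nat, (1 <= k)%N -> (k < a)%N ->
    ~ exists x, lattice_pt x /\ interior_pt (dil k%:R P) x.

Definition lfloor (Q : pset) : pset :=
  conv (fun x => lattice_pt x /\ interior_pt Q x).

Definition remainder (P : pset) (a : nat) : pset :=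
  conv (fun x => lattice_pt x /\
    forall n h, is_facet P n h -> ev n x >= (a%:~R - 1) * h%:~R - 1).

Definition msum (A B : pset) : pset :=
  fun x => exists y z, A y /\ B z /\ x = y + z.

Definition dual (Q : pset) : pset := fun u => forall x, Q x -> evR u x >= -1.

Definition reflexive_polytope (Q : pset) : Prop :=
  lattice_polytope Q /\ lattice_polytope (dual Q).

End Polytopes.

(** The inequalities [n_F(x) >= 1 - a h_F] and [n_F(x) >= (a-1) h_F - 1] add up
to the facet inequalities of [P], so their solution sets [Q1] and [Q2] satisfy
[Q1 + Q2 ⊆ P = ⌊aP⌋ + {P}].  Interior lattice points of [aP] satisfy the first
system by integrality and the lattice points defining [{P}] satisfy the second,
so [⌊aP⌋ ⊆ Q1] and [{P} ⊆ Q2].  Conversely, a point of [Q1] outside [⌊aP⌋] can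
be separated from it by a linear form [u]; adding to it a point of [{P}]
minimising [u] gives a point of [Q1 + Q2 ⊆ ⌊aP⌋ + {P}] on which [u] is too
small, and symmetrically for [Q2].  For [a = 1], [{P} = {x : n_F(x) >= -1}]
contains a neighbourhood of the origin because [P] has finitely many facets,
so its dual is bounded; separation again shows that the dual is the hull of
its lattice points, among which are [0] and all [n_F].  Separation itself is
Gordan's alternative, proved by Fourier-Motzkin elimination. *)

From mathcomp Require Import all_boot all_order all_algebra.
From mathcomp Require Import reals boolp.
From mathcomp Require Import ring lra zify.
Import Order.TTheory GRing.Theory Num.Theory.
Local Open Scope ring_scope.
Set Implicit Arguments. Unset Strict Implicit. Unset Printing Implicit Defensive.

Local Notation hull V := (conv (fun y => y \in V)).

Section Gordan.
Variable R : realType.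

Definition distribution_on (I : finType) (A : pred I) (l : I -> R) : Prop :=
  [/\ forall i, 0 <= l i, forall i, ~~ A i -> l i = 0 & \sum_i l i = 1].

Definition no_null_combination (n : nat) (I : finType) (A : pred I)
    (q : I -> 'I_n -> R) : Prop :=
  forall l, distribution_on A l -> exists j, \sum_i l i * q i j != 0.

Definition positive_solution (n : nat) (I : finType) (A : pred I)
    (q : I -> 'I_n -> R) : Prop :=
  exists u : 'I_n -> R, forall i, A i -> 0 < \sum_j u j * q i j.

Lemma ltr_between (I : finType) (P Q : pred I) (f g : I -> R) :
  (forall i k, P i -> Q k -> f i < g k) ->
  exists t, (forall i, P i -> f i < t) /\ (forall k, Q k -> t < g k).
Proof.
move=> fg; case: (pickP P) => [i0 Pi0|P0]; case: (pickP Q) => [k0 Qk0|Q0].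
- have [i Pi iM] := arg_maxP f Pi0; have [k Qk kM] := arg_minP g Qk0.
  have := fg i k Pi Qk => fgik.
  exists ((f i + g k) / 2); split=> j Sj.
    by have fj : f j <= f i := iM j Sj; lra.
  by have gj : g k <= g j := kM j Sj; lra.
- have [i Pi iM] := arg_maxP f Pi0.
  exists (f i + 1); split=> [j Pj|j]; rewrite ?Q0 //.
  by have fj : f j <= f i := iM j Pj; lra.
- have [k Qk kM] := arg_minP g Qk0.
  exists (g k - 1); split=> [j|j Qj]; rewrite ?P0 //.
  by have gj : g k <= g j := kM j Qj; lra.
- by exists 0; split=> j; rewrite ?P0 ?Q0.
Qed.

(* Fourier-Motzkin step: the first coordinate is eliminated by keeping the rows
   with [h i = 0] and, for each pair of rows with [h i > 0 > h k], the convex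
   combination of the two rows that cancels the first coordinate. *)
Section FourierMotzkin.
Variables (n : nat) (I : finType) (A : pred I) (q : I -> 'I_n.+1 -> R).

Let h i := q i ord0.
Let t i (j : 'I_n) := q i (lift ord0 j).

Definition fm_supp (z : I + I * I) : bool :=
  match z with
  | inl i => A i && (h i == 0)
  | inr (i, k) => [&& A i, A k, 0 < h i & h k < 0]
  end.

Definition fm_left i k := - h k / (h i - h k).
Definition fm_right i k := h i / (h i - h k).

Definition fm_rows (z : I + I * I) (j : 'I_n) : R :=
  match z with
  | inl i => t i j
  | inr (i, k) => fm_left i k * t i j + fm_right i k * t k j
  end.

Lemma fm_weights i k : fm_supp (inr (i, k)) ->
  [/\ 0 <= fm_left i k, 0 <= fm_right i k, fm_left i k + fm_right i k = 1
    & fm_left i k * h i + fm_right i k * h k = 0].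
Proof.
move=> /and4P[_ _ hi hk]; have hik : 0 < h i - h k by lra.
rewrite /fm_left /fm_right; split; rewrite ?divr_ge0 ?oppr_ge0 ?ltW //.
  by field; lra.
by field; lra.
Qed.

Lemma sum_fm (F : I + I * I -> R) :
  \sum_z F z = \sum_i F (inl i) + \sum_i \sum_k F (inr (i, k)).
Proof. by rewrite big_sumType pair_big; congr (_ + _); apply: eq_bigr => -[]. Qed.

Section Transfer.
Variable l : I + I * I -> R.
Hypothesis l_distr : distribution_on fm_supp l.

Let L i := l (inl i) + \sum_k l (inr (i, k)) * fm_left i k
                     + \sum_k l (inr (k, i)) * fm_right k i.

Lemma fm_sum_L (f : I -> R) : \sum_i L i * f i =
  \sum_i l (inl i) * f i +
  \sum_i \sum_k l (inr (i, k)) * (fm_left i k * f i + fm_right i k * f k).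
Proof.
rewrite /L; under eq_bigr do rewrite !mulrDl.
rewrite !big_split /= -addrA; congr (_ + _).
under [X in _ + X]eq_bigr do rewrite mulr_suml.
rewrite exchange_big -big_split; apply: eq_bigr => i _ /=.
rewrite mulr_suml -big_split; apply: eq_bigr => k _ /=.
by rewrite mulrDr !mulrA.
Qed.

Lemma fm_L_distribution : distribution_on A L.
Proof.
case: l_distr => l_ge0 l_out l_sum1.
have w_ge0 z (c : R) : (fm_supp z -> 0 <= c) -> 0 <= l z * c.
  case: (boolP (fm_supp z)) => [_ c_ge0|/l_out -> _]; last by rewrite mul0r.
  exact: mulr_ge0 (l_ge0 z) (c_ge0 isT).
split.
- move=> i; rewrite !addr_ge0 ?sumr_ge0 // => k _; apply: w_ge0.
    by case/fm_weights.
  by case/fm_weights.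
- move=> i Ai; rewrite /L l_out ?big1 ?addr0 //= ?(negbTE Ai) // => k _;
  by rewrite l_out ?mul0r //= (negbTE Ai) ?andbF.
- rewrite -l_sum1 sum_fm -(eq_bigr _ (fun i _ => mulr1 (L i))) fm_sum_L.
  congr (_ + _); first by under eq_bigr do rewrite mulr1.
  apply: eq_bigr => i _; apply: eq_bigr => k _.
  case: (boolP (fm_supp (inr (i, k)))) => [/fm_weights[_ _ w1 _]|/l_out ->].
    by rewrite !mulr1 w1 mulr1.
  by rewrite !mul0r.
Qed.

Lemma fm_L_comb0 : \sum_i L i * q i ord0 = 0.
Proof.
case: l_distr => _ l_out _; rewrite fm_sum_L big1 ?add0r.
  apply: big1 => i _; apply: big1 => k _.
  case: (boolP (fm_supp (inr (i, k)))) => [/fm_weights[_ _ _ ->]|/l_out ->].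
    by rewrite mulr0.
  by rewrite mul0r.
move=> i _; case: (boolP (fm_supp (inl i))) => [/andP[_ /eqP hi0]|/l_out ->].
  by rewrite -/(h i) hi0 mulr0.
by rewrite mul0r.
Qed.

Lemma fm_L_comb j : \sum_i L i * q i (lift ord0 j) = \sum_z l z * fm_rows z j.
Proof. by rewrite fm_sum_L sum_fm. Qed.

End Transfer.

Lemma fm_no_null_combination :
  no_null_combination A q -> no_null_combination fm_supp fm_rows.
Proof.
move=> Aq l l_distr.
have [j0] := Aq _ (fm_L_distribution l_distr).
case: (unliftP ord0 j0) => [j ->|->]; last by rewrite fm_L_comb0 // eqxx.
by rewrite fm_L_comb; exists j.
Qed.

Lemma fm_positive_solution :
  positive_solution fm_supp fm_rows -> positive_solution A q.
Proof.
move=> [u' u'P].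
pose D i := \sum_j u' j * t i j.
(* The missing first coordinate [t0] must lie above [- D i / h i] when [h i > 0]
   and below [D k / - h k] when [h k < 0]; the combined rows say exactly that
   these bounds are compatible. *)
have D_sep i k : A i && (0 < h i) -> A k && (h k < 0) -> - D i / h i < D k / - h k.
  move=> /andP[Ai hi] /andP[Ak hk].
  have ikS : fm_supp (inr (i, k)) by rewrite /= Ai Ak hi hk.
  have hik : 0 < h i - h k by lra.
  have comb : 0 < fm_left i k * D i + fm_right i k * D k.
    rewrite /D !mulr_sumr -big_split.
    by rewrite (eq_bigr (fun j => u' j * fm_rows (inr (i, k)) j)) ?u'P // => j _ /=; ring.
  have combE : fm_left i k * D i + fm_right i k * D k =
                (- h k * D i + h i * D k) / (h i - h k).
    by rewrite /fm_left /fm_right; field; lra.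
  rewrite combE pmulr_lgt0 ?invr_gt0 // in comb.
  by rewrite ltr_pdivrMr ?oppr_gt0 // mulrAC ltr_pdivlMr ?oppr_gt0 //; nra.
have [t0 [t0_above t0_below]] := ltr_between D_sep.
exists (fun m => if unlift ord0 m is Some j then u' j else t0) => i Ai.
rewrite big_ord_recl unlift_none.
under eq_bigr do rewrite liftK.
rewrite -/(D i) -/(h i).
case: (ltrgtP (h i) 0) => hi.
- have := t0_below i; rewrite Ai hi ltr_pdivlMr ?oppr_gt0 // => /(_ isT); nra.
- have := t0_above i; rewrite Ai hi ltr_pdivrMr // => /(_ isT); nra.
- have := u'P (inl i); rewrite /= Ai hi eqxx => /(_ isT).
  by rewrite mulr0 add0r.
Qed.

End FourierMotzkin.

Lemma gordan n (I : finType) (A : pred I) (q : I -> 'I_n -> R) :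
  no_null_combination A q -> positive_solution A q.
Proof.
elim: n I A q => [|n IHn] I A q Aq.
  exists (fun _ => 0) => i Ai.
  have delta_i : distribution_on A (fun k => (k == i)%:R).
    split=> [k|k|]; first exact: ler0n.
      by case: eqP => // ->; rewrite Ai.
    by rewrite (bigD1 i) //= eqxx big1 ?addr0 // => k /negbTE ->.
  by have [[]] := Aq _ delta_i.
exact/fm_positive_solution/IHn/fm_no_null_combination.
Qed.

End Gordan.

Lemma row_neq0_exists (V : nmodType) m (u : 'rV[V]_m) : u != 0 -> exists j, u ord0 j != 0.
Proof.
move=> u0; apply: contra_notP (negP u0) => none; apply/eqP/rowP => j.
by rewrite mxE; apply/eqP; apply: contra_notT none => uj; exists j.
Qed.

Section LinearForms.
Variables (R : realType) (d : nat).
Local Notation vec := (vec R d).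
Local Notation pset := (pset R d).

Lemma evRC (u x : vec) : evR u x = evR x u.
Proof. by apply: eq_bigr => i _; rewrite mulrC. Qed.

Lemma evRD (u x y : vec) : evR u (x + y) = evR u x + evR u y.
Proof. by rewrite /evR -big_split; apply: eq_bigr => i _; rewrite mxE mulrDr. Qed.

Lemma evRZ (u x : vec) c : evR u (c *: x) = c * evR u x.
Proof. by rewrite /evR mulr_sumr; apply: eq_bigr => i _; rewrite mxE mulrCA. Qed.

Lemma evRZl (u x : vec) c : evR (c *: u) x = c * evR u x.
Proof. by rewrite evRC evRZ evRC. Qed.

Lemma evR0 (u : vec) : evR u 0 = 0.
Proof. by rewrite -(scale0r 0) evRZ mul0r. Qed.

Lemma evR_delta (u : vec) i : evR u ('e_i) = u ord0 i.
Proof.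
rewrite /evR (bigD1 i) //= big1 ?addr0 => [|j /negbTE ji]; rewrite mxE ?eqxx ?ji.
  by rewrite mulr1.
by rewrite mulr0.
Qed.

Lemma evR_sum k (l : 'I_k -> R) (p : 'I_k -> vec) u :
  evR u (\sum_i l i *: p i) = \sum_i l i * evR u (p i).
Proof. by elim/big_rec2: _ => [|i y1 y2 _ <-]; rewrite ?evR0 // evRD evRZ. Qed.

Definition intrv (n : 'rV[int]_d) : vec := map_mx (fun z : int => z%:~R) n.

Lemma ev_evR n x : ev n x = evR (intrv n) x.
Proof. by apply: eq_bigr => i _; rewrite mxE. Qed.

Lemma ev_int (n : 'rV[int]_d) (x : vec) : lattice_pt x -> ev n x \is a Num.int.
Proof. by move=> Lx; apply: rpred_sum => i _; rewrite rpredM ?intr_int. Qed.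

Lemma int_num_ltr_leD1 (x : R) (m : int) :
  x \is a Num.int -> m%:~R < x -> (m + 1)%:~R <= x.
Proof. by move=> /floorK <-; rewrite ltr_int ler_int lezD1. Qed.

Lemma conv_ge (S : pset) u c x : conv S x -> (forall y, S y -> c <= evR u y) ->
  c <= evR u x.
Proof.
case=> k [p [l [Sp [l_ge0 [l_sum1 ->]]]]] Sc; rewrite evR_sum -[c]mul1r -l_sum1.
by rewrite mulr_suml; apply: ler_sum => i _; rewrite ler_wpM2l ?Sc.
Qed.

Lemma conv_gt (S : pset) u c x : conv S x -> (forall y, S y -> c < evR u y) ->
  c < evR u x.
Proof.
case=> k [p [l [Sp [l_ge0 [l_sum1 ->]]]]] Sc; rewrite evR_sum -[c]mul1r -l_sum1.
rewrite mulr_suml -subr_gt0 -sumrB.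
have [|i /andP[_ li]] := @psumr_neq0P _ _ predT l (fun i _ => l_ge0 i).
  by rewrite l_sum1 => /eqP; rewrite oner_eq0.
rewrite (bigD1 i) //= -mulrBr ltr_wpDr ?sumr_ge0 // => [j _|].
  by rewrite -mulrBr mulr_ge0 // subr_ge0 ltW ?Sc.
by rewrite mulr_gt0 // subr_gt0 Sc.
Qed.

Lemma conv_eq (S : pset) u c x : conv S x -> (forall y, S y -> evR u y = c) ->
  evR u x = c.
Proof.
case=> k [p [l [Sp [_ [l_sum1 ->]]]]] Sc; rewrite evR_sum.
by under eq_bigr do rewrite Sc //; rewrite -mulr_suml l_sum1 mul1r.
Qed.

Lemma sub_conv (S T : pset) x : (forall y, S y -> T y) -> conv S x -> conv T x.
Proof. by move=> ST [k [p [l [Sp rest]]]]; exists k, p, l; split=> // i; apply: ST. Qed.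

Lemma in_conv (S : pset) x : S x -> conv S x.
Proof.
move=> Sx; exists 1%N, (fun _ => x), (fun _ => 1).
by split=> [//|]; split=> [_|]; rewrite ?ler01 ?big_ord1 ?scale1r.
Qed.

Lemma conv_nonempty (S : pset) x : conv S x -> exists y, S y.
Proof.
case=> [[|k]] [p [l [Sp [_ [l_sum1 _]]]]]; last by exists (p ord0).
by move: l_sum1; rewrite big_ord0 => /eqP; rewrite eq_sym oner_eq0.
Qed.

Lemma conv_enum (S : pset) (V : seq vec) :
  (forall v, v \in V <-> S v) -> forall x, conv S x <-> hull V x.
Proof. by move=> VS x; split; apply: sub_conv => y /VS. Qed.

Lemma conv_separation (V : seq vec) x : ~ hull V x ->
  exists u : vec, forall v, v \in V -> evR u x < evR u v.
Proof.
move=> Vx; pose q (i : 'I_(size V)) j := V`_i ord0 j - x ord0 j.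
have [u u_pos] : positive_solution predT q.
  apply: gordan => l [l_ge0 _ l_sum1].
  case: (pselect (exists j, \sum_i l i * q i j != 0)) => // comb0; case: Vx.
  exists (size V), (fun i => V`_i), l; do !split => //; first by move=> i; apply: mem_nth.
  apply/rowP => j; rewrite summxE.
  have /eqP : \sum_i l i * q i j = 0.
    by apply/eqP; apply: contra_notT comb0 => nz; exists j.
  under eq_bigr do rewrite mulrBr; rewrite sumrB -mulr_suml l_sum1 mul1r subr_eq0.
  by move=> /eqP <-; apply: eq_bigr => i _; rewrite !mxE.
exists (\row_j u j) => v vV; rewrite -subr_gt0 /evR -sumrB.
have := u_pos (Ordinal (etrans (index_mem v V) vV)) isT; rewrite /q /= nth_index //.
by congr (0 < _); apply: eq_bigr => j _; rewrite !mxE mulrBr.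
Qed.

Definition bounded_by (Q : pset) (c : R) := forall x, Q x -> forall i, `|x ord0 i| <= c.

Lemma bounded_lattice_finite (Q : pset) c : bounded_by Q c ->
  exists V : seq vec, forall v, v \in V <-> lattice_pt v /\ Q v.
Proof.
move=> Qc; pose M := Num.Def.archi_bound `|c|.
have cM : c < M%:R by apply: le_lt_trans (archi_boundP (normr_ge0 c)); apply: ler_norm.
(* Lattice points of the box [[-M, M]^d], coordinate [i] being [f i - M]. *)
pose box := [seq (\row_i ((f i)%:R - M%:R) : vec) | f : {ffun 'I_d -> 'I_(M + M).+1}].
exists [seq v <- box | `[< lattice_pt v /\ Q v >]] => v.
rewrite mem_filter; split=> [/andP[/asboolP] //|[Lv Qv]].
rewrite asboolT //=; apply/imageP.
pose z i := Num.floor (v ord0 i).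
have zE i : (z i)%:~R = v ord0 i by rewrite floorK ?Lv.
have zM i : (- (M%:Z) < z i < M%:Z)%R.
  rewrite -(ltr_int R) -(ltr_int R) -/(M%:R) mulrNz -ltr_norml zE.
  exact: le_lt_trans (Qc v Qv i) cM.
exists [ffun i => inord (absz (z i + M%:Z))] => //; apply/rowP => i.
have zM_i := zM i; rewrite !mxE ffunE inordK; last by lia.
rewrite -[(absz _)%:R]/(((absz (z i + M%:Z))%:Z)%:~R : R) gez0_abs; last by lia.
by rewrite intrD zE -[(M%:Z)%:~R]/(M%:R : R) addrK.
Qed.

Lemma seq_bounded (V : seq vec) : exists c, bounded_by (fun v => v \in V) c.
Proof.
exists (\sum_(v <- V) \sum_i `|v ord0 i|) => v vV i.
rewrite (big_rem v vV) /= (bigD1 i) //= -addrA lerDl.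
by rewrite addr_ge0 ?sumr_ge0 // => w _; rewrite sumr_ge0.
Qed.

Lemma hull_bounded (V : seq vec) c : bounded_by (fun v => v \in V) c ->
  bounded_by (hull V) c.
Proof.
move=> Vc x Vx i; rewrite ler_norml; apply/andP; split.
  rewrite -evR_delta evRC; apply: (conv_ge Vx) => y /Vc/(_ i).
  by rewrite evRC evR_delta ler_norml => /andP[].
rewrite -lerN2 -evR_delta evRC -[- evR _ _]mulN1r -evRZl.
apply: (conv_ge Vx) => y /Vc/(_ i).
by rewrite evRZl evRC evR_delta ler_norml mulN1r lerN2 => /andP[].
Qed.

Lemma seq_argmin (V : seq vec) (f : vec -> R) : V != [::] ->
  exists2 b, b \in V & forall y, y \in V -> f b <= f y.
Proof.
elim: V => [//|v V IHV] _; case: (eqVneq V [::]) => [-> | /IHV[b bV bmin]].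
  by exists v => [|y]; rewrite ?mem_head // inE => /eqP ->.
have [vb|bv] := lerP (f v) (f b).
  exists v => [|y]; rewrite ?mem_head // inE => /predU1P[-> //|/bmin].
  exact: le_trans.
exists b => [|y]; rewrite ?inE ?bV ?orbT // => /predU1P[->|/bmin //].
exact: ltW.
Qed.

Lemma interior_evR_gt (T : pset) (u : vec) c x : u != 0 ->
  (forall y, T y -> c <= evR u y) -> interior_pt T x -> c < evR u x.
Proof.
move=> /row_neq0_exists[j uj] Tc [e e_gt0 ballT].
pose s := e / 2 * Num.sg (u ord0 j).
have Ty : T (x + (- s) *: 'e_j).
  apply: ballT => k; rewrite !mxE addrAC subrr add0r normrM normrN normrM normr_sg.
  rewrite uj mulr1 ger0_norm ?divr_ge0 ?ltW //.
  by case: (k == j); rewrite ?normr1 ?normr0 ?mulr1 ?mulr0; lra.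
have := Tc _ Ty; rewrite evRD evRZ evR_delta mulNr -mulrA -normrEsg.
have : 0 < `|u ord0 j| by rewrite normr_gt0.
move=> uj_gt0 ineq; nra.
Qed.

End LinearForms.

Section Polytopes.
Variables (R : realType) (d : nat).
Local Notation vec := (vec R d).
Local Notation pset := (pset R d).

Lemma lattice_polytope_bounded (P : pset) :
  lattice_polytope P -> exists c, bounded_by P c.
Proof.
move=> [V [_ [_ PV]]]; have [c Vc] := seq_bounded V.
by exists c => x /PV; apply: hull_bounded.
Qed.

Lemma msumC (A B : pset) x : msum A B x -> msum B A x.
Proof. by case=> y [z [Ay [Bz ->]]]; exists z, y; rewrite addrC. Qed.

Lemma hull_msum_cancel (VA VB : seq vec) (Q1 Q2 : pset) :
  VB != [::] -> (forall b, b \in VB -> Q2 b) ->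
  (forall x y, Q1 x -> Q2 y -> msum (hull VA) (hull VB) (x + y)) ->
  forall x, Q1 x -> hull VA x.
Proof.
move=> VB_neq0 VB_Q2 Q12_sum x Q1x.
case: (pselect (hull VA x)) => // /conv_separation[u x_sep]; exfalso.
have [b bVB b_min] := seq_argmin (evR u) VB_neq0.
have [y [z [Ay [Bz xbE]]]] := Q12_sum _ _ Q1x (VB_Q2 _ bVB).
have uxy : evR u x < evR u y by apply: (conv_gt Ay).
have ubz : evR u b <= evR u z by apply: (conv_ge Bz).
by have := congr1 (evR u) xbE; rewrite !evRD; lra.
Qed.

Lemma dual_bounded (Q : pset) (e : R) : 0 < e ->
  (forall x : vec, (forall i, `|x ord0 i| <= e) -> Q x) -> bounded_by (dual Q) e^-1.
Proof.
move=> e_gt0 boxQ u Qu i; pose s := e * Num.sg (u ord0 i).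
have Qx : Q ((- s) *: 'e_i).
  apply: boxQ => k; rewrite !mxE normrM normrN normrM normr_sg gtr0_norm //.
  case: (u ord0 i != 0); case: (k == i);
    by rewrite ?andbF ?normr1 ?normr0 ?mulr1 ?mulr0 // ltW.
have := Qu _ Qx; rewrite evRZ evR_delta mulNr -mulrA -normrEsg.
move=> ineq; rewrite -(ler_pM2l e_gt0) mulfV ?gt_eqF //; lra.
Qed.

Section DualOfIntegralInequalities.
Variables (N Q : pset) (K : R).
Hypothesis N_lattice : forall n, N n -> lattice_pt n.
Hypothesis N_bounded : bounded_by N K.
Hypothesis QE : forall x, Q x <-> forall n, N n -> -1 <= evR n x.

Lemma ineqs_contain_box : exists2 e : R, 0 < e &
  forall x : vec, (forall i, `|x ord0 i| <= e) -> Q x.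
Proof.
have DK_gt0 : 0 < d%:R * `|K| + 1 by rewrite ltr_wpDl ?mulr_ge0.
exists (d%:R * `|K| + 1)^-1; rewrite ?invr_gt0 // => x x_small; apply/QE => n Nn.
suff : `|evR n x| <= 1 by rewrite ler_norml => /andP[].
apply: le_trans (ler_norm_sum _ _ _) _.
apply: le_trans (_ : \sum_(i < d) `|K| * (d%:R * `|K| + 1)^-1 <= 1).
  apply: ler_sum => i _; rewrite normrM ler_pM //.
  exact: le_trans (N_bounded Nn i) (ler_norm K).
rewrite sumr_const card_ord -[_ *+ d]mulr_natr mulrAC ler_pdivrMr //.
by rewrite mul1r mulrC lerDl.
Qed.

Lemma dual_ineqs_lattice_polytope : lattice_polytope (dual Q).
Proof.
have [e e_gt0 boxQ] := ineqs_contain_box.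
have [VD VDE] := bounded_lattice_finite (dual_bounded e_gt0 boxQ).
have VD0 : 0 \in VD.
  by apply/VDE; split=> [i|x _]; rewrite ?mxE ?rpred0 // evRC evR0 lerN10.
have N_VD n : N n -> n \in VD by move=> Nn; apply/VDE; split=> [|x /QE]; auto.
have VD_neq0 : VD != [::] by apply: contraTneq VD0 => ->.
exists VD; split=> //.
split=> [v /VDE[] //|u]; split=> [Du|VDu x Qx]; last first.
  by rewrite evRC; apply: (conv_ge VDu) => v /VDE[_ /(_ x Qx)]; rewrite evRC.
case: (pselect (hull VD u)) => // /conv_separation[x u_sep]; exfalso.
have [w wVD w_min] := seq_argmin (evR x) VD_neq0.
have xw_le0 : evR x w <= 0 by have := w_min _ VD0; rewrite evR0.
have xuw := u_sep w wVD.
(* Chosen so that [t * evR x u < -1 <= t * evR x w]. *)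
pose t := 2 / - (evR x u + evR x w).
have t_gt0 : 0 < t by rewrite divr_gt0 // oppr_gt0; lra.
have tE : t * - (evR x u + evR x w) = 2 by rewrite divfK // oppr_eq0 lt_eqF //; lra.
have Qtx : Q (t *: x).
  by apply/QE => n /N_VD/w_min xwn; rewrite evRZ evRC; nra.
by have := Du _ Qtx; rewrite evRZ evRC; nra.
Qed.

End DualOfIntegralInequalities.

End Polytopes.

Section Facets.
Variables (R : realType) (d : nat).
Local Notation vec := (vec R d).
Local Notation pset := (pset R d).
Local Notation intrv := (@intrv R d).

Lemma supporting_face_hull (V : seq vec) (u : vec) (c : R) y :
  (forall x, hull V x -> c <= evR u x) -> hull V y -> evR u y = c ->
  conv (fun v => v \in V /\ evR u v = c) y.
Proof.
move=> Vc Vy; case: (Vy) => k [p [l [Vp [l_ge0 [l_sum1 yE]]]]] uyc.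
have Vc' i : c <= evR u (p i) by apply/Vc/in_conv/Vp.
have slack0 : \sum_i l i * (evR u (p i) - c) = 0.
  under eq_bigr do rewrite mulrBr.
  by rewrite sumrB -mulr_suml l_sum1 mul1r -evR_sum -yE uyc subrr.
have slack_ge0 i : true -> 0 <= l i * (evR u (p i) - c).
  by rewrite mulr_ge0 // subr_ge0.
have on_face i : l i != 0 -> evR u (p i) = c.
  move=> li; apply/eqP; rewrite -subr_eq0.
  by have /eqP := psumr_eq0P slack_ge0 slack0 (i := i) isT; rewrite mulf_eq0 (negbTE li).
have [|j /andP[_ /lt0r_neq0 lj]] := @psumr_neq0P _ _ predT l (fun i _ => l_ge0 i).
  by rewrite l_sum1 => /eqP; rewrite oner_eq0.
exists k, (fun i => if l i == 0 then p j else p i), l; split.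
  by move=> i; case: eqP => [_|/eqP li]; split; rewrite ?Vp ?on_face.
do !split=> //.
by rewrite yE; apply: eq_bigr => i _; case: eqP => // ->; rewrite !scale0r.
Qed.

Lemma mulmx_trE (u : vec) m (M : 'M[R]_(m, d)) j :
  (u *m M^T) ord0 j = evR u (row j M).
Proof. by rewrite !mxE; apply: eq_bigr => k _; rewrite !mxE. Qed.

Lemma ker_corank1_colinear m (M : 'M[R]_(m, d)) (u v : vec) :
  \rank M = d.-1 -> u *m M^T = 0 -> v *m M^T = 0 -> u != 0 ->
  exists c, v = c *: u.
Proof.
move=> rM /sub_kermxP Ku /sub_kermxP Kv u0; apply/sub_rVP.
apply: submx_trans Kv _; rewrite -(mxrank_leqif_sup Ku).2 eqn_leq mxrankS //.
by rewrite rank_rV u0 mxrank_ker mxrank_tr rM; lia.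
Qed.

Lemma full_dim_hyperplane (P : pset) (u : vec) c : full_dim P -> u != 0 ->
  ~ (forall x, P x -> evR u x = c).
Proof.
move=> [x0 [M [Px0 [rM PM]]]] u0 Pc; move: u0; apply/negP/negPn/eqP.
have uM : u *m M^T = 0.
  by apply/rowP => j; rewrite mulmx_trE mxE; have := Pc _ (PM j); rewrite evRD Pc //; lra.
have M_unit : M^T \in unitmx by rewrite -row_free_unit /row_free mxrank_tr rM.
by rewrite -[u](mulmxK M_unit) uM mul0mx.
Qed.

Lemma big_gcdn_scale_eq (I : finType) (f g : I -> nat) a b :
  (forall i, a * f i = b * g i)%N ->
  \big[gcdn/0%N]_i f i = 1%N -> \big[gcdn/0%N]_i g i = 1%N -> a = b.
Proof.
move=> fg gcd_f gcd_g.
have scale_gcd c h : (c * \big[gcdn/0%N]_i h i = \big[gcdn/0%N]_i (c * h i))%N.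
  by apply: (big_morph (muln c)) => [x y|]; rewrite ?muln_gcdr ?muln0.
by rewrite -[a]muln1 -gcd_f -[b]muln1 -gcd_g !scale_gcd; apply: eq_bigr.
Qed.

Lemma primitive_neq0 (n : 'rV[int]_d) : primitive n -> n != 0.
Proof.
apply: contraTneq => ->; rewrite /primitive big1 // => i _.
by rewrite mxE.
Qed.

Lemma intrv_neq0 (n : 'rV[int]_d) : n != 0 -> intrv n != 0.
Proof.
move=> /row_neq0_exists[j nj]; apply/eqP => /rowP/(_ j)/eqP.
by rewrite !mxE intr_eq0 (negbTE nj).
Qed.

Lemma primitive_colinear (n n' : 'rV[int]_d) (c : R) :
  primitive n -> primitive n' -> intrv n' = c *: intrv n -> 0 < c -> c = 1.
Proof.
move=> pn pn' n'E c_gt0; have [j nj] := row_neq0_exists (primitive_neq0 pn).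
have n'_i i : (n' ord0 i)%:~R = c * (n ord0 i)%:~R :> R.
  by have := congr1 (fun u : vec => u ord0 i) n'E; rewrite /= !mxE.
have nj_eq : `|n ord0 j|%N = `|n' ord0 j|%N.
  apply: (big_gcdn_scale_eq _ (eqP pn') (eqP pn)) => i; rewrite -!abszM.
  by congr absz; apply: (@intr_inj R); rewrite !intrM !n'_i; ring.
have : `|(n' ord0 j)%:~R : R| = c * `|(n ord0 j)%:~R : R|.
  by rewrite n'_i normrM gtr0_norm.
rewrite -!intr_norm -!natr_absz nj_eq -{1}[_%:R]mul1r => /mulIf -> //.
by rewrite pnatr_eq0 -nj_eq absz_eq0.
Qed.

Lemma intrv_inj : injective intrv.
Proof.
move=> n n' /rowP nn'; apply/rowP => i.
by have := nn' i; rewrite !mxE => /intr_inj.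
Qed.

Section FacetsOfPolytope.
Variables (P : pset) (V : seq vec).
Hypothesis PV : forall x, P x <-> hull V x.
Hypothesis P_full : full_dim P.

(* The [d-1] independent directions of the facet make [n'] a multiple of [n];
   the factor is positive as [P] is full-dimensional, and [1] by primitivity. *)
Lemma facet_eq_of_vertices n h n' h' : is_facet P n h -> is_facet P n' h' ->
  (forall v, v \in V -> ev n v = - h%:~R -> ev n' v = - h'%:~R) -> n' = n /\ h' = h.
Proof.
move=> [pn [n_supp [x0 [M [Px0 [x0_on [rM M_on]]]]]]] [pn' [n'_supp _]] vert.
have n_neq0 := intrv_neq0 (primitive_neq0 pn).
have on' y : P y -> ev n y = - h%:~R -> ev n' y = - h'%:~R.
  move=> /PV Vy; rewrite !ev_evR => ny; apply: conv_eq (supporting_face_hull _ Vy ny) _.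
    by move=> x /PV Px; rewrite -ev_evR n_supp.
  by move=> v [vV nv]; rewrite -ev_evR vert // ev_evR.
have ker m hh : (forall y, P y -> ev n y = - h%:~R -> ev m y = - hh%:~R) ->
    intrv m *m M^T = 0.
  move=> mE; apply/rowP => j; rewrite mulmx_trE mxE; have [Pj nj] := M_on j.
  by have := mE _ Pj nj; have := mE _ Px0 x0_on; rewrite !ev_evR evRD; lra.
have [c n'E] := ker_corank1_colinear rM (ker n h (fun _ _ e => e)) (ker n' h' on') n_neq0.
have evc y : ev n' y = c * ev n y by rewrite !ev_evR n'E evRZl.
have hc : - h'%:~R = c * - h%:~R by rewrite -(on' _ Px0 x0_on) evc x0_on.
have c_gt0 : 0 < c.
  rewrite lt_def; apply/andP; split.
    apply: contraTneq (intrv_neq0 (primitive_neq0 pn')) => c0.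
    by rewrite n'E c0 scale0r eqxx.
  case: (lerP 0 c) => // c_lt0; exfalso.
  apply: (full_dim_hyperplane (c := - h%:~R) P_full n_neq0) => z Pz.
  have := n'_supp z Pz; rewrite evc hc ler_nM2l // => n_le.
  by rewrite -ev_evR; apply: le_anti; rewrite n_le n_supp.
have c1 := primitive_colinear pn pn' n'E c_gt0.
split; first by apply: intrv_inj; rewrite n'E c1 scale1r.
by apply/(@intr_inj R)/oppr_inj; rewrite hc c1 mul1r.
Qed.

(* A facet is determined by the set of vertices it contains. *)
Lemma facet_normals_finite :
  exists Ns : seq 'rV[int]_d, forall n h, is_facet P n h -> n \in Ns.
Proof.
pose verts n h := [set k : 'I_(size V) | ev n V`_k == - h%:~R].
pose normal_of (S : {set 'I_(size V)}) : option 'rV[int]_d :=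
  if pselect (exists nh, is_facet P nh.1 nh.2 /\ verts nh.1 nh.2 = S) is left ex
  then Some (sval (cid ex)).1 else None.
exists (pmap normal_of (enum {set 'I_(size V)})) => n h Fn.
rewrite mem_pmap; apply/mapP; exists (verts n h); first by rewrite mem_enum.
rewrite /normal_of; case: pselect => [ex|]; last by case; exists (n, h).
case: (cid ex) => [[m k] /= [Fm verts_m]].
suff [-> //] : n = m /\ h = k.
apply: facet_eq_of_vertices Fm Fn _ => v vV.
have /setP/(_ (Ordinal (etrans (index_mem v V) vV))) := verts_m.
by rewrite !inE /= nth_index // => eqv mv; apply/eqP; rewrite -eqv mv.
Qed.

Lemma facet_normals_bounded : exists K,
  bounded_by (fun u => exists n h, is_facet P n h /\ u = intrv n) K.
Proof.
have [Ns Ns_facets] := facet_normals_finite.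
have [K Kb] := seq_bounded (map intrv Ns).
by exists K => _ [n [h [Fn ->]]]; apply/Kb/map_f/Ns_facets/Fn.
Qed.

End FacetsOfPolytope.

End Facets.

Section Decomposition.
Variables (R : realType) (d : nat) (P : pset R d) (a : nat).
Local Notation vec := (vec R d).
Local Notation pset := (pset R d).
Hypothesis P_lattice : lattice_polytope P.
Hypothesis P_hrep : forall x, P x <-> forall n h, is_facet P n h -> ev n x >= - h%:~R.
Hypothesis P_codegree : is_codegree P a.
Hypothesis P_decomp : forall x, P x <-> msum (lfloor (dil a%:R P)) (remainder P a) x.

Definition floor_hrep : pset :=
  fun x => forall n h, is_facet P n h -> ev n x >= 1 - a%:~R * h%:~R.
Definition remainder_hrep : pset :=
  fun x => forall n h, is_facet P n h -> ev n x >= (a%:~R - 1) * h%:~R - 1.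

Lemma interior_floor_hrep x :
  lattice_pt x -> interior_pt (dil a%:R P) x -> floor_hrep x.
Proof.
move=> Lx Ix n h Fn; have [pn [n_supp _]] := Fn.
have ah_lt : (- (a%:Z * h))%:~R < ev n x.
  rewrite ev_evR; apply: (interior_evR_gt (intrv_neq0 R (primitive_neq0 pn)) _ Ix).
  move=> _ [z [Pz ->]]; rewrite evRZ -ev_evR mulrNz intrM -mulrN.
  by rewrite ler_wpM2l ?ler0n ?n_supp.
by have := int_num_ltr_leD1 (ev_int n Lx) ah_lt; rewrite intrD intrN intrM addrC.
Qed.

Lemma floor_add_remainder_hrep x y :
  floor_hrep x -> remainder_hrep y -> P (x + y).
Proof.
move=> Qx Qy; apply/P_hrep => n h Fn.
by have := Qx n h Fn; have := Qy n h Fn; rewrite !ev_evR evRD; lra.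
Qed.

Lemma interior_lattice_points_enum : exists2 VA : seq vec, VA != [::] &
  forall v, v \in VA <-> lattice_pt v /\ interior_pt (dil a%:R P) v.
Proof.
have [c Pc] := lattice_polytope_bounded P_lattice.
have [VA VAE] : exists VA : seq vec,
    forall v, v \in VA <-> lattice_pt v /\ interior_pt (dil a%:R P) v.
  apply: (bounded_lattice_finite (c := a%:R * c)) => x [e e_gt0 ballP] i.
  have [z [Pz ->]] : dil a%:R P x by apply: ballP => j; rewrite subrr normr0.
  by rewrite mxE normrM ger0_norm ?ler0n // ler_wpM2l ?Pc.
exists VA => //; have [_ [[x0 x0_in] _]] := P_codegree.
by apply/eqP => VA0; have := proj2 (VAE x0) x0_in; rewrite VA0.
Qed.

Lemma remainder_lattice_points_enum : exists2 VB : seq vec, VB != [::] &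
  forall v, v \in VB <-> lattice_pt v /\ remainder_hrep v.
Proof.
have [c Pc] := lattice_polytope_bounded P_lattice.
have [_ [[x0 [Lx0 Ix0]] _]] := P_codegree.
have [c0 x0c] := seq_bounded [:: x0].
have [VB VBE] : exists VB : seq vec,
    forall v, v \in VB <-> lattice_pt v /\ remainder_hrep v.
  apply: (bounded_lattice_finite (c := c + c0)) => y Qy i.
  have := Pc _ (floor_add_remainder_hrep (interior_floor_hrep Lx0 Ix0) Qy) i.
  have := x0c x0 (mem_head _ _) i; rewrite mxE !ler_norml => /andP[? ?] /andP[? ?].
  by apply/andP; split; lra.
exists VB => //; have [V [V_neq0 [_ PV]]] := P_lattice.
have [y [z [_ [/conv_nonempty[b [Lb Qb]] _]]]] :
    msum (lfloor (dil a%:R P)) (remainder P a) V`_0.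
  by apply/P_decomp/PV/in_conv/mem_nth; rewrite lt0n size_eq0.
by apply/eqP => VB0; have := proj2 (VBE b) (conj Lb Qb); rewrite VB0.
Qed.

Section Vertices.
Variables VA VB : seq vec.
Hypothesis VA_neq0 : VA != [::].
Hypothesis VB_neq0 : VB != [::].
Hypothesis VAE : forall v, v \in VA <-> lattice_pt v /\ interior_pt (dil a%:R P) v.
Hypothesis VBE : forall v, v \in VB <-> lattice_pt v /\ remainder_hrep v.

Lemma hrep_add_msum x y : floor_hrep x -> remainder_hrep y ->
  msum (hull VA) (hull VB) (x + y).
Proof.
move=> Qx Qy; have /P_decomp[x' [y' [Ax' [By' ->]]]] := floor_add_remainder_hrep Qx Qy.
by exists x', y'; rewrite -(conv_enum VAE) -(conv_enum VBE).
Qed.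

Lemma lfloor_dilE x : lfloor (dil a%:R P) x <-> floor_hrep x.
Proof.
split=> [Ax n h Fn | Qx].
  rewrite ev_evR; apply: (conv_ge Ax) => y [Ly Iy].
  by rewrite -ev_evR interior_floor_hrep.
apply/(conv_enum VAE)/(hull_msum_cancel VB_neq0 _ hrep_add_msum Qx).
by move=> b /VBE[].
Qed.

Lemma remainderE x : remainder P a x <-> remainder_hrep x.
Proof.
split=> [Bx n h Fn | Qx].
  by rewrite ev_evR; apply: (conv_ge Bx) => y [_ /(_ n h Fn)]; rewrite ev_evR.
apply/(conv_enum VBE)/(hull_msum_cancel (Q2 := floor_hrep) VA_neq0 _ _ Qx).
  by move=> b /VAE[Lb Ib]; apply: interior_floor_hrep.
by move=> y z Qy Qz; rewrite addrC; exact: msumC (hrep_add_msum Qz Qy).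
Qed.

Lemma floor_hrep_lattice_polytope : lattice_polytope floor_hrep.
Proof.
exists VA; split=> //; split=> [v /VAE[] //|x].
by split=> [/lfloor_dilE/(conv_enum VAE) | /(conv_enum VAE)/lfloor_dilE].
Qed.

Lemma remainder_hrep_lattice_polytope : lattice_polytope remainder_hrep.
Proof.
exists VB; split=> //; split=> [v /VBE[] //|x].
by split=> [/remainderE/(conv_enum VBE) | /(conv_enum VBE)/remainderE].
Qed.

Lemma remainder_reflexive : full_dim P -> a = 1%N -> reflexive_polytope (remainder P a).
Proof.
move=> P_full a1; split.
  by exists VB; split=> //; split=> [v /VBE[] //|]; apply: conv_enum.
have [V [_ [_ PV]]] := P_lattice; have [K NK] := facet_normals_bounded PV P_full.
have a1h (h : int) : (a%:~R - 1) * h%:~R - 1 = -1 :> R.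
  by rewrite a1 mulr1z subrr mul0r sub0r.
apply: (dual_ineqs_lattice_polytope (K := K) _ NK) => [u [n [h [_ ->]]] i | x].
  by rewrite mxE intr_int.
split=> [/remainderE Qx _ [n [h [Fn ->]]] | Nx].
  by have := Qx n h Fn; rewrite a1h ev_evR.
by apply/remainderE => n h Fn; rewrite a1h ev_evR; apply: Nx; exists n, h.
Qed.

End Vertices.

End Decomposition.

Theorem theorem3p12 (R : realType) (d : nat) (P : pset R d) (a : nat) :
  lattice_polytope P -> full_dim P ->
  (* facet presentation *)
  (forall x, P x <-> forall n h, is_facet P n h -> ev n x >= - h%:~R) ->
  is_codegree P a ->
  (forall x, P x <-> msum (lfloor (dil a%:R P)) (remainder P a) x) ->
  (forall x, lfloor (dil a%:R P) x <->
     forall n h, is_facet P n h -> ev n x >= 1 - a%:~R * h%:~R) /\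
  (forall x, remainder P a x <->
     forall n h, is_facet P n h -> ev n x >= (a%:~R - 1) * h%:~R - 1) /\
  lattice_polytope (fun x : vec R d => forall n h, is_facet P n h ->
                                ev n x >= 1 - a%:~R * h%:~R) /\
  lattice_polytope (fun x : vec R d => forall n h, is_facet P n h ->
                                ev n x >= (a%:~R - 1) * h%:~R - 1) /\
  (a = 1%N -> reflexive_polytope (remainder P a)).
Proof.
move=> P_lattice P_full P_hrep P_codegree P_decomp.
have [VA VA_neq0 VAE] := interior_lattice_points_enum P_lattice P_codegree.
have [VB VB_neq0 VBE] :=
  remainder_lattice_points_enum P_lattice P_hrep P_codegree P_decomp.
split; first exact (lfloor_dilE P_hrep P_decomp VB_neq0 VAE VBE).
split; first exact (remainderE P_hrep P_decomp VA_neq0 VAE VBE).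
split.
  exact (floor_hrep_lattice_polytope P_hrep P_decomp VA_neq0 VB_neq0 VAE VBE).
split.
  exact (remainder_hrep_lattice_polytope P_hrep P_decomp VA_neq0 VB_neq0 VAE VBE).
exact (remainder_reflexive P_lattice P_hrep P_decomp VA_neq0 VB_neq0 VAE VBE P_full).
Qed.
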